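(* Let $R$ be a monad on $\mathrm{Sets}$ and $LM$ a left $R$-module with values in $\mathrm{Sets}$. The pre-category $CC(R,LM)$, equipped with the length function, the object $pt$, the map $ft$, the morphisms $p_X$, and the objects $f^*X$ and morphisms $q(f,X)$ described below, is a C-system.
   Context: Notation: $[n]=\{1,\dots,n\}$, $[0]=\emptyset$. A monad $R$ on Sets is given by sets $R(X)$, maps $\eta_X:X\to R(X)$ and, for $f:X\to R(Y)$, maps $\mathrm{bind}(f):R(X)\to R(Y)$ with $\mathrm{bind}(\eta_X)=\mathrm{id}$, $\mathrm{bind}(f)\circ\eta_X=f$, $\mathrm{bind}(\mathrm{bind}(g)\circ f)=\mathrm{bind}(g)\circ\mathrm{bind}(f)$. A left $R$-module $LM$ with values in Sets is a functor $LM:\mathrm{Sets}\to\mathrm{Sets}$ with maps $\rho(f):LM(X)\to LM(Y)$ for $f:X\to R(Y)$ such that $\rho(\eta_X)=\mathrm{id}$ and $\rho(g)\circ\rho(f)=\rho(\mathrm{bind}(g)\circ f)$. Elements $y$ of a set $Y$ are regarded as elements of $R(Y)$ via $\eta_Y$. For $E\in LM([m])$ (resp. $E\in R([m])$) and $f_1,\dots,f_m\in R(Y)$ write $E(f_1/1,\dots,f_m/m)$ for $\rho(f)(E)$ (resp. $\mathrm{bind}(f)(E)$), where $f(i)=f_i$. The pre-category $CC(R,LM)$: its set of objects is $\coprod_{n\ge0}Ob_n$ with $Ob_n=LM([0])\times LM([1])\times\dots\times LM([n-1])$; we write objects as sequences $(T_1,\dots,T_n)$ with $T_i\in LM([i-1])$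 and set $l(T_1,\dots,T_n)=n$. The set of morphisms from $(E_1,\dots,E_m)$ to $(T_1,\dots,T_n)$ is $R([m])^n$ (morphism sets for different pairs of objects are disjoint). The composite of $f=(f_1,\dots,f_n):(E_1,\dots,E_m)\to(T_1,\dots,T_n)$ and $g=(g_1,\dots,g_k):(T_1,\dots,T_n)\to(U_1,\dots,U_k)$ is $g\circ f=(g_1(f_1/1,\dots,f_n/n),\dots,g_k(f_1/1,\dots,f_n/n))$; the identity of an object of length $n$ is $(1,\dots,n)$. Structure: $pt$ is the empty sequence; $ft(T_1,\dots,T_n)=(T_1,\dots,T_{n-1})$ for $n\ge1$, $ft(pt)=pt$; $p_X=(1,\dots,n):(T_1,\dots,T_{n+1})\to(T_1,\dots,T_n)$ for $X=(T_1,\dots,T_{n+1})$ and $p_{pt}=\mathrm{id}$; for $X=(T_1,\dots,T_{n+1})$ and $f=(f_1,\dots,f_n):(R_1,\dots,R_m)\to(T_1,\dots,T_n)$, $f^*X=(R_1,\dots,R_m,T_{n+1}(f_1/1,\dots,f_n/n))$ and $q(f,X)=(f_1,\dots,f_n,m+1):f^*X\to X$. A C-system is a category $CC$ together with a function $l:Ob(CC)\to\mathbb{N}$, an object $pt$, a map $ft:Ob(CC)\to Ob(CC)$, morphisms $p_X:X\to ft(X)$ for all $X$, and, for every $X$ with $l(X)>0$ and every morphism $f:Y\to ft(X)$, an object $f^*X$ and a morphism $q(f,X):f^*X\to X$, such that: $l^{-1}(0)=\{pt\}$; $l(ft(X))=l(X)-1$ if $l(X)>0$ and $ft(pt)=pt$;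 $pt$ is a final object; $l(f^*X)>0$, $ft(f^*X)=Y$, and $p_X\circ q(f,X)=f\circ p_{f^*X}$ with this commutative square a pullback square; $\mathrm{id}_{ft(X)}^*X=X$ and $q(\mathrm{id}_{ft(X)},X)=\mathrm{id}_X$; and for $g:Z\to Y$, $f:Y\to ft(X)$: $(f\circ g)^*X=g^*(f^*X)$ and $q(f\circ g,X)=q(f,X)\circ q(g,f^*X)$. *)

From mathcomp Require Import all_boot.

Set Implicit Arguments.
Unset Strict Implicit.
Unset Printing Implicit Defensive.

(* Monads on Sets (Sets = Type), in Kleisli form.                        *)
Record monad := Monad {
  mon :> Type -> Type;
  eta : forall X : Type, X -> mon X;
  bind : forall X Y : Type, (X -> mon Y) -> mon X -> mon Y;
  bind_eta : forall (X : Type) (x : mon X), bind (@eta X) x = x;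
  bind_etaK : forall (X Y : Type) (f : X -> mon Y) (x : X), bind f (eta x) = f x;
  bind_bind : forall (X Y Z : Type) (f : X -> mon Y) (g : Y -> mon Z) (x : mon X),
      bind (fun y => bind g (f y)) x = bind g (bind f x)
}.
Arguments eta {m X}.
Arguments bind {m X Y}.

Record lmodule (R : monad) := LModule {
  lmod :> Type -> Type;
  lmap : forall X Y : Type, (X -> Y) -> lmod X -> lmod Y;
  lmap_id : forall (X : Type) (x : lmod X), lmap (fun y => y) x = x;
  lmap_comp : forall (X Y Z : Type) (f : X -> Y) (g : Y -> Z) (x : lmod X),
      lmap g (lmap f x) = lmap (fun y => g (f y)) x;
  rho : forall X Y : Type, (X -> R Y) -> lmod X -> lmod Y;
  rho_eta : forall (X : Type) (x : lmod X), rho (@eta R X) x = x;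
  rho_rho : forall (X Y Z : Type) (f : X -> R Y) (g : Y -> R Z) (x : lmod X),
      rho g (rho f x) = rho (fun y => bind g (f y)) x
}.
Arguments rho {R l X Y}.
Arguments lmap {R l X Y}.

(* C-systems.  The category is given in "essentially algebraic" form:   *)
(* a type of objects, a type of morphisms (so morphism sets for distinct *)
(* pairs of objects are disjoint), dom/cod, identities and a total       *)
(* composition comp g f (= g o f) that is only meaningful when           *)
(* cod f = dom g.  f^*X and q(f,X) are given as total operations, only   *)
(* constrained when l X > 0 and cod f = ft X.                             *)
Record is_Csystem (Ob Mor : Type) (dom cod : Mor -> Ob) (idm : Ob -> Mor)
    (comp : Mor -> Mor -> Mor) (l : Ob -> nat) (pt : Ob) (ft : Ob -> Ob)
    (p : Ob -> Mor) (fstar : Mor -> Ob -> Ob) (q : Mor -> Ob -> Mor) : Prop := {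
  cs_dom_id : forall X, dom (idm X) = X;
  cs_cod_id : forall X, cod (idm X) = X;
  cs_dom_comp : forall f g, cod f = dom g -> dom (comp g f) = dom f;
  cs_cod_comp : forall f g, cod f = dom g -> cod (comp g f) = cod g;
  cs_id_left : forall f, comp (idm (cod f)) f = f;
  cs_id_right : forall f, comp f (idm (dom f)) = f;
  cs_assoc : forall f g h, cod f = dom g -> cod g = dom h ->
      comp h (comp g f) = comp (comp h g) f;
  cs_l0 : forall X, l X = 0 <-> X = pt;
  cs_l_ft : forall X, 0 < l X -> l (ft X) = (l X).-1;
  cs_ft_pt : ft pt = pt;
  cs_final : forall X, exists! f, dom f = X /\ cod f = pt;
  cs_dom_p : forall X, dom (p X) = X;
  cs_cod_p : forall X, cod (p X) = ft X;
  cs_l_fstar : forall X f, 0 < l X -> cod f = ft X -> 0 < l (fstar f X);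
  cs_ft_fstar : forall X f, 0 < l X -> cod f = ft X -> ft (fstar f X) = dom f;
  cs_dom_q : forall X f, 0 < l X -> cod f = ft X -> dom (q f X) = fstar f X;
  cs_cod_q : forall X f, 0 < l X -> cod f = ft X -> cod (q f X) = X;
  cs_square : forall X f, 0 < l X -> cod f = ft X ->
      comp (p X) (q f X) = comp f (p (fstar f X));
  cs_pullback : forall X f, 0 < l X -> cod f = ft X ->
      forall u v, dom u = dom v -> cod u = X -> cod v = dom f ->
        comp (p X) u = comp f v ->
        exists! h, [/\ dom h = dom u, cod h = fstar f X,
                       comp (q f X) h = u & comp (p (fstar f X)) h = v];
  cs_fstar_id : forall X, 0 < l X -> fstar (idm (ft X)) X = X;
  cs_q_id : forall X, 0 < l X -> q (idm (ft X)) X = idm X;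
  cs_fstar_comp : forall X f g, 0 < l X -> cod f = ft X -> cod g = dom f ->
      fstar (comp f g) X = fstar g (fstar f X);
  cs_q_comp : forall X f g, 0 < l X -> cod f = ft X -> cod g = dom f ->
      q (comp f g) X = comp (q f X) (q g (fstar f X))
}.

(* The pre-category CC(R, LM).  [n] is represented by 'I_n = {0..n-1}   *)
(* (index i of the paper is the ordinal i-1).                            *)
Section CC.
Variable R : monad.
Variable LM : lmodule R.

(* Ob_ n = LM([0]) x LM([1]) x ... x LM([n-1]), built as snoc-lists.   *)
Inductive Ob_ : nat -> Type :=
| onil : Ob_ 0
| ocons : forall n, Ob_ n -> LM 'I_n -> Ob_ n.+1.

Definition CCOb : Type := {n : nat & Ob_ n}.

Definition CCl (X : CCOb) : nat := projT1 X.

Definition CCpt : CCOb := existT _ 0 onil.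

Definition CCft (X : CCOb) : CCOb :=
  match projT2 X with
  | onil => CCpt
  | ocons n X' _ => existT _ n X'
  end.

(* A morphism (E_1..E_m) -> (T_1..T_n) is an element of R([m])^n. *)
Record CCMor : Type := MkMor {
  mdom : CCOb;
  mcod : CCOb;
  marr : 'I_(CCl mcod) -> R 'I_(CCl mdom)
}.
Arguments marr : clear implicits.

Definition CCid (X : CCOb) : CCMor := @MkMor X X (fun i => eta i).

(* g o f = (g_1(f_1/1,..,f_n/n), ..., g_k(f_1/1,..,f_n/n)); junk (= f)  *)
(* when the lengths do not match (never the case for composable pairs). *)
Definition CCcomp (g f : CCMor) : CCMor :=
  match CCl (mdom g) =P CCl (mcod f) with
  | ReflectT e => @MkMor (mdom f) (mcod g)
                    (fun i => bind (fun j => marr f (cast_ord e j)) (marr g i))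
  | ReflectF _ => f
  end.

Definition incl (n : nat) : 'I_n -> 'I_n.+1 := widen_ord (leqnSn n).

(* p_X = (1,..,n) : (T_1..T_{n+1}) -> (T_1..T_n);  p_pt = id. *)
Definition CCp (X : CCOb) : CCMor :=
  match X with
  | existT n Xn =>
    match Xn in Ob_ k return CCMor with
    | onil => CCid CCpt
    | ocons n X' T =>
        @MkMor (existT _ n.+1 (ocons X' T)) (existT _ n X')
               (fun i => eta (incl i))
    end
  end.

(* f^*X = (R_1..R_m, T_{n+1}(f_1/1,..,f_n/n)) for X = (T_1..T_{n+1}). *)
Definition CCfstar (f : CCMor) (X : CCOb) : CCOb :=
  match X with
  | existT _ Xn =>
    match Xn in Ob_ k return CCOb with
    | onil => mdom f
    | ocons n X' T =>
        match CCl (mcod f) =P n with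
        | ReflectT e =>
            existT _ (CCl (mdom f)).+1
              (ocons (projT2 (mdom f))
                     (rho (fun j : 'I_n => marr f (cast_ord (esym e) j)) T))
        | ReflectF _ => mdom f
        end
    end
  end.

(* q(f,X) = (f_1,..,f_n, m+1) : f^*X -> X, where f_i in R([m]) is       *)
(* regarded in R([m+1]) via the inclusion [m] -> [m+1].                  *)
Definition CCq (f : CCMor) (X : CCOb) : CCMor :=
  match X with
  | existT _ Xn =>
    match Xn in Ob_ k return CCMor with
    | onil => CCid (mdom f)
    | ocons n X' T =>
        match CCl (mcod f) =P n with
        | ReflectT e =>
            @MkMor
              (existT _ (CCl (mdom f)).+1
                 (ocons (projT2 (mdom f))
                        (rho (fun j : 'I_n => marr f (cast_ord (esym e) j)) T)))
              (existT _ n.+1 (ocons X' T))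
              (fun i : 'I_n.+1 =>
                 match unlift ord_max i with
                 | Some j => bind (fun k => eta (incl k))
                                  (marr f (cast_ord (esym e) j))
                 | None => eta ord_max
                 end)
        | ReflectF _ => CCid (mdom f)
        end
    end
  end.

End CC.

From mathcomp Require Import all_boot.
From Stdlib Require Import FunctionalExtensionality Eqdep.

Set Implicit Arguments.
Unset Strict Implicit.
Unset Printing Implicit Defensive.

(* Every object of positive length is an extension (Y, T) of its father Y,
   and a morphism into it is a tuple (a_1, .., a_n, t).  Composition is
   Kleisli substitution, so the category laws are the monad laws, and the
   laws for f^* are the module laws rho(eta) = id and rho g o rho f =
   rho (g o f).  The canonical square is a pullback because a morphism into
   f^*X = (Y', T(f)) is a pair (v, t) with v into Y', and the conditions
   q(f,X) o h = u, p o h = v just say that h = (v, u_{n+1}). *)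

Section CCsystem.
Variable R : monad.
Variable LM : lmodule R.
Notation Ob := (CCOb LM).
Notation Mor := (CCMor LM).

Lemma MkMor_ext (d c : Ob) (a b : 'I_(CCl c) -> R 'I_(CCl d)) :
  a =1 b -> MkMor a = MkMor b.
Proof. by move=> /functional_extensionality ->. Qed.

Lemma MkMor_inj (d c : Ob) (a b : 'I_(CCl c) -> R 'I_(CCl d)) :
  MkMor a = MkMor b -> a =1 b.
Proof.
move=> /(f_equal (fun f : Mor =>
  existT (fun p : Ob * Ob => 'I_(CCl p.2) -> R 'I_(CCl p.1))
         (mdom f, mcod f) (@marr _ _ f))).
by move=> H; have /= -> := inj_pair2 _ _ _ _ _ H.
Qed.

Lemma CCcomp_MkMor (d c c' : Ob) (a : 'I_(CCl c) -> R 'I_(CCl d))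
    (b : 'I_(CCl c') -> R 'I_(CCl c)) :
  CCcomp (MkMor b) (MkMor a) = MkMor (fun i => bind a (b i)).
Proof.
rewrite /CCcomp; case: eqP => // e.
by apply: MkMor_ext => i; congr bind; apply: functional_extensionality => j;
   rewrite cast_ord_id.
Qed.

Definition CCext (X : Ob) (T : LM 'I_(CCl X)) : Ob :=
  existT _ (CCl X).+1 (ocons (projT2 X) T).
Arguments CCext : clear implicits.

Lemma CCft_ext (X : Ob) T : CCft (CCext X T) = X.
Proof. by case: X T. Qed.

Lemma CCl_gt0P (X : Ob) : 0 < CCl X -> exists Y T, X = CCext Y T.
Proof. by case: X => n [] // m Y T _; exists (existT _ m Y), T. Qed.

Lemma CCl_eq0 (X : Ob) : CCl X = 0 <-> X = CCpt LM.
Proof.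
split=> [|-> //].
by case: X => n [] // m Y T.
Qed.

Lemma CCpt_final (X : Ob) : exists! f : Mor, mdom f = X /\ mcod f = CCpt LM.
Proof.
exists (@MkMor _ _ X (CCpt LM)
          (fun i => False_rect _ (notF (etrans (esym (ltn0 i)) (ltn_ord i))))).
split=> // -[d c a] /= [Ed Ec]; subst d c.
by apply: MkMor_ext => -[].
Qed.

Lemma CCcomp_dom (f g : Mor) : mcod f = mdom g -> mdom (CCcomp g f) = mdom f.
Proof. by case: f g => d c a [d' c' b] /= E; subst d'; rewrite CCcomp_MkMor. Qed.

Lemma CCcomp_cod (f g : Mor) : mcod f = mdom g -> mcod (CCcomp g f) = mcod g.
Proof. by case: f g => d c a [d' c' b] /= E; subst d'; rewrite CCcomp_MkMor. Qed.

Lemma CCcomp_idl (f : Mor) : CCcomp (CCid (mcod f)) f = f.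
Proof. by case: f => d c a; rewrite CCcomp_MkMor; apply: MkMor_ext => i; rewrite bind_etaK. Qed.

Lemma CCcomp_idr (f : Mor) : CCcomp f (CCid (mdom f)) = f.
Proof. by case: f => d c a; rewrite CCcomp_MkMor; apply: MkMor_ext => i; rewrite bind_eta. Qed.

Lemma CCcompA (f g h : Mor) : mcod f = mdom g -> mcod g = mdom h ->
  CCcomp h (CCcomp g f) = CCcomp (CCcomp h g) f.
Proof.
case: f g h => d c a [d' c' b] [d'' c'' e] /= E1 E2; subst d' d''.
by rewrite !CCcomp_MkMor; apply: MkMor_ext => i; rewrite bind_bind.
Qed.

Lemma incl_lift_max m (j : 'I_m) : incl j = lift ord_max j.
Proof. by apply: val_inj; rewrite /= /bump leqNgt ltn_ord. Qed.

Variant incl_spec m : 'I_m.+1 -> Type :=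
  | InclSpec j : incl_spec (incl j)
  | MaxSpec : incl_spec ord_max.

Lemma inclP m (i : 'I_m.+1) : incl_spec i.
Proof.
case: (unliftP ord_max i) => [j ->|->]; last exact: MaxSpec.
by rewrite -incl_lift_max; apply: InclSpec.
Qed.

Definition snoc_arr (A : Type) m (a : 'I_m -> A) (x : A) (i : 'I_m.+1) : A :=
  if unlift ord_max i is Some j then a j else x.

Lemma snoc_arr_incl (A : Type) m (a : 'I_m -> A) x j : snoc_arr a x (incl j) = a j.
Proof. by rewrite incl_lift_max /snoc_arr liftK. Qed.

Lemma snoc_arr_max (A : Type) m (a : 'I_m -> A) x : snoc_arr a x ord_max = x.
Proof. by rewrite /snoc_arr unlift_none. Qed.

Lemma snoc_arrE (A : Type) m (h : 'I_m.+1 -> A) :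
  h =1 snoc_arr (fun j => h (incl j)) (h ord_max).
Proof. by move=> i; case: (inclP i) => [j|]; rewrite ?snoc_arr_incl ?snoc_arr_max. Qed.

Lemma CCp_ext (X : Ob) T :
  CCp (CCext X T) = @MkMor _ _ (CCext X T) X (fun i => eta (incl i)).
Proof. by case: X T. Qed.

Lemma CCfstar_ext (d X : Ob) (a : 'I_(CCl X) -> R 'I_(CCl d)) T :
  CCfstar (MkMor a) (CCext X T) = CCext d (rho a T).
Proof.
case: X a T => n Xn a T; rewrite /CCfstar /=; case: eqP => // e.
by congr existT; congr ocons; congr rho; apply: functional_extensionality => j;
   rewrite cast_ord_id.
Qed.

Lemma CCq_ext (d X : Ob) (a : 'I_(CCl X) -> R 'I_(CCl d)) T :
  CCq (MkMor a) (CCext X T) =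
  @MkMor _ _ (CCext d (rho a T)) (CCext X T)
    (snoc_arr (fun j => bind (fun k => eta (incl k)) (a j)) (eta ord_max)).
Proof.
case: X a T => n Xn a T; rewrite /CCq /=; case: eqP => // e.
have -> : (fun j : 'I_n => a (cast_ord (esym e) j)) = a.
  by apply: functional_extensionality => j; rewrite cast_ord_id.
by apply: MkMor_ext => i; rewrite /snoc_arr; case: unliftP => // j _;
   rewrite cast_ord_id.
Qed.

Section Pullback.
Variables (d X : Ob) (a : 'I_(CCl X) -> R 'I_(CCl d)) (T : LM 'I_(CCl X)).
Let f : Mor := MkMor a.
Let Xe := CCext X T.

Lemma CCpq_square :
  CCcomp (CCp Xe) (CCq f Xe) = CCcomp f (CCp (CCfstar f Xe)).
Proof.
rewrite /f /Xe CCfstar_ext CCq_ext !CCp_ext !CCcomp_MkMor.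
by apply: MkMor_ext => i; rewrite bind_etaK snoc_arr_incl.
Qed.

Lemma CCpq_pullback (u v : Mor) :
  mdom u = mdom v -> mcod u = Xe -> mcod v = mdom f ->
  CCcomp (CCp Xe) u = CCcomp f v ->
  exists! h, [/\ mdom h = mdom u, mcod h = CCfstar f Xe,
                 CCcomp (CCq f Xe) h = u & CCcomp (CCp (CCfstar f Xe)) h = v].
Proof.
rewrite /f /Xe CCfstar_ext CCq_ext !CCp_ext.
case: u v => e c ua [e' c' va] E1 E2 E3; simpl in E1, E2, E3; subst e' c c'.
rewrite !CCcomp_MkMor => /MkMor_inj /= uv.
exists (@MkMor _ _ e (CCext d (rho a T)) (snoc_arr va (ua ord_max))); split.
  split=> //; rewrite CCcomp_MkMor; apply: MkMor_ext => i.
  - case: (inclP i) => [j|]; last by rewrite !snoc_arr_max bind_etaK snoc_arr_max.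
    rewrite !snoc_arr_incl.
    have vj : (fun k => bind (snoc_arr va (ua ord_max)) (eta (incl k))) = va.
      by apply: functional_extensionality => k; rewrite bind_etaK snoc_arr_incl.
    by rewrite -bind_bind vj -uv bind_etaK.
  - by rewrite bind_etaK snoc_arr_incl.
case=> e' c h [/= E1 E2]; subst e' c.
rewrite !CCcomp_MkMor => /MkMor_inj qh /MkMor_inj ph.
apply: MkMor_ext => i; case: (inclP i) => [j|].
  by rewrite snoc_arr_incl -ph bind_etaK.
by rewrite snoc_arr_max -qh snoc_arr_max bind_etaK.
Qed.

End Pullback.

Lemma CCfstar_id (X : Ob) T : CCfstar (CCid X) (CCext X T) = CCext X T.
Proof. by rewrite CCfstar_ext rho_eta. Qed.

Lemma CCq_id (X : Ob) T : CCq (CCid X) (CCext X T) = CCid (CCext X T).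
Proof.
rewrite CCq_ext; move: (rho _ T) (rho_eta T) => _ ->.
by apply: MkMor_ext => i; rewrite [RHS]snoc_arrE; congr snoc_arr;
   apply: functional_extensionality => j; rewrite bind_etaK.
Qed.

Section Functoriality.
Variables (e d X : Ob) (a : 'I_(CCl X) -> R 'I_(CCl d))
          (b : 'I_(CCl d) -> R 'I_(CCl e)) (T : LM 'I_(CCl X)).
Let f : Mor := MkMor a.
Let g : Mor := MkMor b.

Lemma CCfstar_comp : CCfstar (CCcomp f g) (CCext X T) = CCfstar g (CCfstar f (CCext X T)).
Proof. by rewrite /f /g CCcomp_MkMor !CCfstar_ext rho_rho. Qed.

Lemma CCq_comp :
  CCq (CCcomp f g) (CCext X T) = CCcomp (CCq f (CCext X T)) (CCq g (CCfstar f (CCext X T))).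
Proof.
rewrite /f /g CCcomp_MkMor CCfstar_ext !CCq_ext CCcomp_MkMor rho_rho.
apply: MkMor_ext => i; case: (inclP i) => [j|].
  rewrite !snoc_arr_incl -!bind_bind; congr bind.
  by apply: functional_extensionality => k; rewrite bind_etaK snoc_arr_incl.
by rewrite !snoc_arr_max bind_etaK snoc_arr_max.
Qed.

End Functoriality.

Lemma CCfstar_domain_ind (P : Mor -> Ob -> Prop) :
  (forall d Y T (a : 'I_(CCl Y) -> R 'I_(CCl d)), P (MkMor a) (CCext Y T)) ->
  forall X f, 0 < CCl X -> mcod f = CCft X -> P f X.
Proof.
move=> HP X [d c a] /CCl_gt0P [Y [T ->]] /=; rewrite CCft_ext => Ec.
by subst c; apply: HP.
Qed.

End CCsystem.

Theorem proposition3p1 (R : monad) (LM : lmodule R) :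
  is_Csystem (@mdom R LM) (@mcod R LM) (@CCid R LM) (@CCcomp R LM)
    (@CCl R LM) (@CCpt R LM) (@CCft R LM) (@CCp R LM)
    (@CCfstar R LM) (@CCq R LM).
Proof.
split=> //.
- exact: CCcomp_dom.
- exact: CCcomp_cod.
- exact: CCcomp_idl.
- exact: CCcomp_idr.
- exact: CCcompA.
- exact: CCl_eq0.
- by move=> X /CCl_gt0P [Y [T ->]]; rewrite CCft_ext.
- exact: CCpt_final.
- by case=> n [].
- by case=> n [].
- by apply: CCfstar_domain_ind => d Y T a; rewrite CCfstar_ext.
- by apply: CCfstar_domain_ind => d Y T a; rewrite CCfstar_ext CCft_ext.
- by apply: CCfstar_domain_ind => d Y T a; rewrite CCq_ext CCfstar_ext.
- by apply: CCfstar_domain_ind => d Y T a; rewrite CCq_ext.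
- by apply: CCfstar_domain_ind => d Y T a; apply: CCpq_square.
- by apply: CCfstar_domain_ind => d Y T a; apply: CCpq_pullback.
- by move=> X /CCl_gt0P [Y [T ->]]; rewrite CCft_ext CCfstar_id.
- by move=> X /CCl_gt0P [Y [T ->]]; rewrite CCft_ext CCq_id.
- move=> X f g lX Ef; move: g; move: X f lX Ef.
  apply: CCfstar_domain_ind => d Y T a [e c b] Ec; simpl in Ec; subst c.
  exact: CCfstar_comp.
- move=> X f g lX Ef; move: g; move: X f lX Ef.
  apply: CCfstar_domain_ind => d Y T a [e c b] Ec; simpl in Ec; subst c.
  exact: CCq_comp.
Qed.
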